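(* Let $G$ be a bridgeless cubic graph, let $M_1,M_2,M_3$ be 1-factors of $G$, and let $G_c$ be the $k$-core of $G$ with respect to $M_1,M_2,M_3$, where $k$ is a positive integer. Then $|\overline{M_1}|_{odd}+|\overline{M_2}|_{odd}+|\overline{M_3}|_{odd}\leq 2k$. Moreover, if equality holds, then $G_c$ is a Petersen core.
   Context: Graphs may have multiple edges and loops. A 1-factor is a spanning 1-regular subgraph (identified with its edge set). For 1-factors $M_1,M_2,M_3$ of a cubic graph $G$, let $E_i$ ($i=0,1,2,3$) be the set of edges of $G$ lying in precisely $i$ of $M_1,M_2,M_3$ (counted as a list). The core $G_c$ with respect to $M_1,M_2,M_3$ is the subgraph of $G$ induced by the edge set $E_0\cup E_2\cup E_3$; it is a $k$-core if $|E_0|=k$. The core is cyclic if it is a union of pairwise vertex-disjoint circuits. $G_c$ is a Petersen core (with respect to $M_1,M_2,M_3$) if (1) $G_c$ is cyclic, and (2) for every path $P$ of length 5 in $G_c$ there do not exist two distinct edges $e_1,e_2$ of $P$ and indices $1\le i<j\le 3$ with $e_1,e_2\in M_i\cap M_j$. For a 1-factor $M$ of $G$, $\overline{M}$ denotes the complementary 2-factor $G-M$, and $|\overline{M}|_{odd}$ the number of its odd components (odd circuits). *)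

(* Finite multigraphs (multiple edges and loops allowed):
   vertex type V, edge type E, each edge e has end-vertices src e and tgt e
   (a loop has src e = tgt e). *)
From mathcomp Require Import all_boot.
Set Implicit Arguments. Unset Strict Implicit. Unset Printing Implicit Defensive.

Section Graphs.
Variables (V E : finType) (src tgt : E -> V).

Definition joins (e : E) (x y : V) : bool :=
  ((src e == x) && (tgt e == y)) || ((src e == y) && (tgt e == x)).

(* degree of v in the spanning subgraph with edge set S (a loop counts twice) *)
Definition deg_in (S : {set E}) (v : V) : nat :=
  \sum_(e in S) ((src e == v) + (tgt e == v)).

Definition cubic : Prop := forall v, deg_in [set: E] v = 3.

Definition one_factor (M : {set E}) : Prop := forall v, deg_in M v = 1.

Definition adj_without (e : E) : rel V :=
  fun x y => [exists f, (f != e) && joins f x y].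

Definition bridge (e : E) : bool := ~~ connect (adj_without e) (src e) (tgt e).

Definition bridgeless : Prop := forall e, ~~ bridge e.

Definition adj_compl (M : {set E}) : rel V :=
  fun x y => [exists f, (f \notin M) && joins f x y].

Definition compl_components (M : {set E}) : {set {set V}} :=
  [set [set y | connect (adj_compl M) x y] | x : V].

Definition comp_edges (M : {set E}) (C : {set V}) : {set E} :=
  [set e | (e \notin M) && (src e \in C)].

(* |bar M|_odd : number of odd circuits (components with an odd number of
   edges) of the complementary 2-factor G - M *)
Definition odd_count (M : {set E}) : nat :=
  #|[set C in compl_components M | odd #|comp_edges M C|]|.

Definition mult (M1 M2 M3 : {set E}) (e : E) : nat :=
  (e \in M1) + (e \in M2) + (e \in M3).

Definition Ei (M1 M2 M3 : {set E}) (i : nat) : {set E} :=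
  [set e | mult M1 M2 M3 e == i].

Definition core_edges (M1 M2 M3 : {set E}) : {set E} :=
  Ei M1 M2 M3 0 :|: Ei M1 M2 M3 2 :|: Ei M1 M2 M3 3.

Definition core_vertices (M1 M2 M3 : {set E}) : {set V} :=
  [set v | [exists e in core_edges M1 M2 M3, (src e == v) || (tgt e == v)]].

Definition is_k_core (M1 M2 M3 : {set E}) (k : nat) : Prop :=
  #|Ei M1 M2 M3 0| = k.

(* cyclic: union of pairwise vertex-disjoint circuits, i.e. every vertex of
   the core has degree exactly 2 in the core *)
Definition cyclic_core (M1 M2 M3 : {set E}) : Prop :=
  forall v, v \in core_vertices M1 M2 M3 -> deg_in (core_edges M1 M2 M3) v = 2.

Definition core_path5 (M1 M2 M3 : {set E}) (p : 'I_6 -> V) (q : 'I_5 -> E) : Prop :=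
  injective p /\
  forall i : 'I_5, q i \in core_edges M1 M2 M3 /\
                   joins (q i) (p (widen_ord (leqnSn 5) i)) (p (lift ord0 i)).

Definition both_in (A B : {set E}) (e1 e2 : E) : bool :=
  (e1 \in A :&: B) && (e2 \in A :&: B).

Definition petersen_core (M1 M2 M3 : {set E}) : Prop :=
  cyclic_core M1 M2 M3 /\
  forall (p : 'I_6 -> V) (q : 'I_5 -> E), core_path5 M1 M2 M3 p q ->
    ~ (exists i j : 'I_5, i != j /\
         [|| both_in M1 M2 (q i) (q j), both_in M1 M3 (q i) (q j)
           | both_in M2 M3 (q i) (q j)]).

End Graphs.

From mathcomp Require Import all_boot zify.
Set Implicit Arguments. Unset Strict Implicit. Unset Printing Implicit Defensive.

(* Fix a 1-factor A and let B, C be the other two. Summing degrees over an odd circuit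
   K of G - A gives |K| = sum_K deg_(A∩B) + 2|K ∩ (B - A)| and
   2|K ∩ E_0| = sum_K deg_(A∩B) + sum_K deg_(A∩C) + 2|K ∩ (B∩C - A)|, so K meets E_0.
   Charging two units to every odd circuit, paid by its E_0-edges (twice by an edge that
   is alone on its odd circuit), gives 2|bar A|_odd <= k + #{E_0-edges alone for A}, and
   an E_0-edge is alone for at most one of the three factors; this yields the bound.
   In the equality case every E_0-edge is alone for exactly one factor and every circuit
   meeting E_0 is odd and meets it at most twice. Local degree counting then shows that
   every core vertex has exactly one E_0-edge and one E_2-edge, so paths in the core
   alternate between E_0 and E_2, and two edges of the same M_i ∩ M_j at distance 2 or 4
   along such a path contradict these counts. Bridgelessness only serves to exclude loops. *)

Lemma card_set_sum (T : finType) (P : {set T}) (Q : pred T) :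
  #|[set x in P | Q x]| = \sum_(x in P) Q x.
Proof.
rewrite -sum1_card big_mkcond [RHS]big_mkcond /=; apply: eq_bigr => x _.
by rewrite !inE; case: (x \in P); case: (Q x).
Qed.

Lemma bigD2_nat (T : finType) (f : T -> nat) (K : {pred T}) u v :
  u \in K -> v \in K -> u != v ->
  \sum_(w in K) f w = f u + f v + \sum_(w | (w \in K) && (w != u) && (w != v)) f w.
Proof.
move=> uK vK uv; rewrite (bigD1 u) //= (bigD1 v) /= ?addnA //.
by rewrite vK eq_sym.
Qed.

Lemma leq_sum_eq (T : finType) (P : {pred T}) (f g : T -> nat) :
  (forall i, i \in P -> f i <= g i) -> \sum_(i in P) f i = \sum_(i in P) g i ->
  forall i, i \in P -> f i = g i.
Proof.
move=> fg sum_fg i iP; move: sum_fg; rewrite (bigD1 i) // [in RHS](bigD1 i) //=.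
have : \sum_(j | (j \in P) && (j != i)) f j <= \sum_(j | (j \in P) && (j != i)) g j.
  by apply: leq_sum => j /andP [jP _]; apply: fg.
by have := fg i iP; lia.
Qed.

Lemma oddE n : odd n -> exists t, n = 2 * t + 1.
Proof. by move=> n_odd; exists n./2; rewrite -[n in LHS]odd_double_half n_odd -muln2; lia. Qed.

Lemma evenE n : ~~ odd n -> exists t, n = 2 * t.
Proof.
by move=> n_even; exists n./2; rewrite -[n in LHS]odd_double_half (negbTE n_even) -muln2; lia.
Qed.

Section Degrees.
Variables (V E : finType) (src tgt : E -> V).
Local Notation deg := (deg_in src tgt).
Local Notation joins := (joins src tgt).
Local Notation incident e v := ((src e == v) || (tgt e == v)).
Implicit Types (S T : {set E}) (K : {set V}) (e f : E) (u v x y z : V).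

Definition nedges S K : nat := #|[set e in S | src e \in K]|.

Lemma deg_inE S v : deg S v = \sum_e (e \in S) * ((src e == v) + (tgt e == v)).
Proof. by rewrite /deg_in big_mkcond; apply: eq_bigr => e _; case: (e \in S); rewrite ?mul1n. Qed.

Lemma deg_set0 v : deg set0 v = 0.
Proof. by rewrite /deg_in big_pred0 // => e; rewrite inE. Qed.

Lemma deg_subset S T v : S \subset T -> deg S v <= deg T v.
Proof.
move=> /subsetP sub; rewrite !deg_inE; apply: leq_sum => e _.
by case eS: (e \in S); rewrite // (sub _ eS).
Qed.

Lemma deg_setUI S T v : deg S v + deg T v = deg (S :|: T) v + deg (S :&: T) v.
Proof.
rewrite !deg_inE -!big_split /=; apply: eq_bigr => e _; rewrite !inE.
by case: (e \in S); case: (e \in T); rewrite /= ?mul1n ?addn0.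
Qed.

Lemma deg_gt0P S v : reflect (exists2 e, e \in S & incident e v) (0 < deg S v).
Proof.
apply: (iffP idP) => [|[e eS ev]].
  rewrite /deg_in lt0n sum_nat_eq0 => /forallPn [e]; rewrite negb_imply => /andP [eS ev].
  by exists e => //; move: ev; case: (src e == v); case: (tgt e == v).
by rewrite /deg_in (bigD1 e) //=; move: ev; case: (src e == v); case: (tgt e == v).
Qed.

Lemma deg_gt1 S v e f : e != f -> e \in S -> f \in S ->
  incident e v -> incident f v -> 1 < deg S v.
Proof.
move=> ef eS fS ev fv; rewrite /deg_in (bigD1 e) //= (bigD1 f) /=; last by rewrite fS eq_sym.
move: ev fv; case: (src e == v); case: (tgt e == v);
  by case: (src f == v); case: (tgt f == v) => //= _ _; lia.
Qed.

Lemma deg_setI_le Y S T v : one_factor src tgt Y ->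
  deg (S :&: Y) v + deg (T :&: Y) v <= 1 + deg (S :&: T :&: Y) v.
Proof.
move=> oneY; rewrite deg_setUI; apply: leq_add.
  by rewrite -(oneY v); apply: deg_subset; apply/subsetP => e; rewrite !inE => /orP [] /andP [].
by rewrite setIACA setIid.
Qed.

Lemma sum_deg S K :
  \sum_(v in K) deg S v = \sum_(e in S) ((src e \in K) + (tgt e \in K)).
Proof.
have sum_eq a : \sum_(v in K) (a == v) = (a \in K).
  rewrite big_mkcond /= (bigD1 a) //= eqxx big1 ?addn0; first by case: (a \in K).
  by move=> v /negbTE av; rewrite eq_sym av; case: (v \in K).
by rewrite /deg_in exchange_big /=; apply: eq_bigr => e _; rewrite big_split /= !sum_eq.
Qed.

Lemma joinsC e x y : joins e x y = joins e y x.
Proof. by rewrite /joins orbC. Qed.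

Lemma joins_incident e x y : joins e x y -> incident e x /\ incident e y.
Proof. by case/orP => /andP [/eqP -> /eqP ->]; rewrite !eqxx ?orbT. Qed.

Lemma joins_src e x y : joins e x y -> src e = x \/ src e = y.
Proof. by case/orP => /andP [/eqP -> _]; [left | right]. Qed.

Lemma joins_ends e x y z w : joins e x y -> joins e z w -> (x == z) || (x == w).
Proof.
case/orP => /andP [/eqP sx /eqP ty] /orP [] /andP [/eqP sz /eqP tw]; apply/orP;
  by [left; apply/eqP; congruence | right; apply/eqP; congruence].
Qed.

Lemma joins_other e x y z : joins e x y -> joins e y z -> x = z.
Proof. by case/orP => /andP [/eqP a /eqP b] /orP [] /andP [/eqP c /eqP d]; congruence. Qed.

End Degrees.

Section Complement.
Variables (V E : finType) (src tgt : E -> V) (A : {set E}).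
Local Notation adj := (adj_compl src tgt A).
Local Notation comps := (compl_components src tgt A).
Local Notation nedges := (nedges src).
Implicit Types (S : {set E}) (K : {set V}) (e : E) (v x y : V).

Definition comp_of x : {set V} := [set y | connect adj x y].

Definition alone Z e : bool :=
  odd #|comp_edges src A (comp_of (src e))| && (nedges Z (comp_of (src e)) == 1).

Definition count_tight Z : Prop := forall x, 0 < nedges Z (comp_of x) ->
  odd #|comp_edges src A (comp_of x)| /\ nedges Z (comp_of x) <= 2.

Lemma adj_compl_sym : symmetric adj.
Proof. by move=> x y; apply: eq_existsb => f; rewrite joinsC. Qed.

Lemma mem_comp_of_edge x e : e \notin A -> (src e \in comp_of x) = (tgt e \in comp_of x).
Proof.
have adj_e : e \notin A -> adj (src e) (tgt e).
  by move=> eA; apply/existsP; exists e; rewrite eA /joins !eqxx.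
move=> eA; rewrite !inE; apply/idP/idP => xe.
  exact: connect_trans xe (connect1 (adj_e eA)).
by apply: connect_trans xe (connect1 _); rewrite adj_compl_sym adj_e.
Qed.

Lemma mem_comp_of_joins x e y z : e \notin A -> joins src tgt e y z ->
  y \in comp_of x -> z \in comp_of x.
Proof. by move=> eA /orP [] /andP [/eqP <- /eqP <-]; rewrite (mem_comp_of_edge x eA). Qed.

Lemma comp_of_self x : x \in comp_of x.
Proof. by rewrite inE connect0. Qed.

Lemma comp_of_eq x y : y \in comp_of x -> comp_of y = comp_of x.
Proof.
rewrite inE => xy; apply/setP => z; rewrite !inE.
by rewrite (same_connect (sym_connect_sym adj_compl_sym) xy).
Qed.

Lemma comp_of_compl_components x : comp_of x \in comps.
Proof. exact: imset_f. Qed.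

Lemma compl_componentsP K : K \in comps -> exists x, K = comp_of x.
Proof. by case/imsetP => x _ ->; exists x. Qed.

Lemma card_comp_edges K : #|comp_edges src A K| = nedges (~: A) K.
Proof. by apply: eq_card => e; rewrite !inE. Qed.

Lemma sum_compl_components S (h : {set V} -> nat) :
  \sum_(K in comps) h K * nedges S K = \sum_(e in S) h (comp_of (src e)).
Proof.
have sum_mem v : \sum_(K in comps) (v \in K) * h K = h (comp_of v).
  rewrite (bigD1 (comp_of v)) ?comp_of_compl_components //= comp_of_self mul1n.
  rewrite big1 ?addn0 // => K /andP [/imsetP [x _ ->] Kv].
  case vK: (v \in comp_of x); rewrite ?mul0n //.
  by rewrite (comp_of_eq vK) eqxx in Kv.
under eq_bigr => K _ do rewrite /nedges card_set_sum big_distrr /=.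
rewrite exchange_big /=; apply: eq_bigr => e _.
by rewrite -sum_mem; apply: eq_bigr => K _; rewrite mulnC.
Qed.

Lemma sum_nedges S : \sum_(K in comps) nedges S K = #|S|.
Proof.
rewrite -sum1_card -(sum_compl_components S (fun=> 1)).
by apply: eq_bigr => K _; rewrite mul1n.
Qed.

Lemma sum_deg_comp_of x S : S \subset ~: A ->
  \sum_(v in comp_of x) deg_in src tgt S v = 2 * nedges S (comp_of x).
Proof.
move=> /subsetP SA; rewrite sum_deg /nedges card_set_sum big_distrr /=.
apply: eq_bigr => e eS; have : e \notin A by have := SA e eS; rewrite inE.
by move/(mem_comp_of_edge x) <-; case: (src e \in comp_of x).
Qed.

End Complement.

Section OneFactor.
Variables (V E : finType) (src tgt : E -> V) (A B : {set E}).
Hypotheses (cub : cubic src tgt) (oneA : one_factor src tgt A) (oneB : one_factor src tgt B).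
Local Notation deg := (deg_in src tgt).
Local Notation comp := (comp_of src tgt A).
Local Notation nedges := (nedges src).

Lemma deg_setC v : deg (~: A) v = 2.
Proof. by have := deg_setUI src tgt A (~: A) v; rewrite setUCr setICr deg_set0 oneA cub; lia. Qed.

Lemma card_comp_edges_comp_of x : #|comp_edges src A (comp x)| = #|comp x|.
Proof.
have := sum_deg_comp_of src tgt x (subxx (~: A)).
under eq_bigr => v _ do rewrite deg_setC.
by rewrite sum_nat_const card_comp_edges; lia.
Qed.

Lemma card_comp_edges_split x : #|comp_edges src A (comp x)| =
  \sum_(v in comp x) deg (A :&: B) v + 2 * nedges (B :&: ~: A) (comp x).
Proof.
rewrite card_comp_edges_comp_of -(sum_deg_comp_of src tgt x (subsetIr B (~: A))) -big_split /=.
rewrite -sum1_card; apply: eq_bigr => v _; rewrite deg_setUI -(oneB v).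
have -> : A :&: B :|: B :&: ~: A = B.
  by apply/setP => e; rewrite !inE; case: (e \in A); case: (e \in B).
have -> : A :&: B :&: (B :&: ~: A) = set0.
  by apply/setP => e; rewrite !inE; case: (e \in A); rewrite ?andbF.
by rewrite deg_set0 addn0.
Qed.

End OneFactor.

Definition share_pair (E : finType) (A B C : {set E}) (f g : E) : bool :=
  [|| both_in A B f g, both_in A C f g | both_in B C f g].

Lemma both_inC (E : finType) (A B : {set E}) f g : both_in A B f g = both_in B A f g.
Proof. by rewrite /both_in setIC. Qed.

Lemma share_pair_sym (E : finType) (A B C : {set E}) f g :
  share_pair A B C f g = share_pair A B C g f.
Proof. by rewrite /share_pair /both_in !(andbC (f \in _)). Qed.

Lemma share_pairC12 (E : finType) (A B C : {set E}) f g :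
  share_pair B A C f g = share_pair A B C f g.
Proof. by rewrite /share_pair (both_inC B A) (orbC (both_in B C f g)). Qed.

Lemma share_pairC23 (E : finType) (A B C : {set E}) f g :
  share_pair A C B f g = share_pair A B C f g.
Proof. by rewrite /share_pair (both_inC C B) orbCA. Qed.

Section Triples.
Variables (V E : finType) (src tgt : E -> V).

Record factor_triple (A B C Z : {set E}) : Prop := FactorTriple {
  triple_factor1 : one_factor src tgt A;
  triple_factor2 : one_factor src tgt B;
  triple_factor3 : one_factor src tgt C;
  triple_zero : Z = ~: (A :|: B :|: C) }.

Lemma factor_tripleC12 A B C Z : factor_triple A B C Z -> factor_triple B A C Z.
Proof. by case=> oneA oneB oneC ->; split; rewrite // [B :|: A]setUC. Qed.

Lemma factor_tripleC23 A B C Z : factor_triple A B C Z -> factor_triple A C B Z.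
Proof. by case=> oneA oneB oneC ->; split; rewrite // setUAC. Qed.

End Triples.

Section FactorTriple.
Variables (V E : finType) (src tgt : E -> V) (A B C Z : {set E}).
Hypotheses (cub : cubic src tgt) (tr : factor_triple src tgt A B C Z).
Let oneA := triple_factor1 tr.
Let oneB := triple_factor2 tr.
Let oneC := triple_factor3 tr.
Local Notation deg := (deg_in src tgt).
Local Notation joins := (joins src tgt).
Local Notation incident e v := ((src e == v) || (tgt e == v)).
Local Notation comp := (comp_of src tgt A).
Local Notation nedges := (nedges src).
Local Notation alone := (alone src tgt A Z).
Implicit Types (e f g : E) (u v x : V).

Lemma mem_zero e : (e \in Z) = [&& e \notin A, e \notin B & e \notin C].
Proof. by rewrite (triple_zero tr) !inE !negb_or -andbA. Qed.

Lemma zero_sub_compl : Z \subset ~: A.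
Proof. by apply/subsetP => e; rewrite mem_zero inE => /andP []. Qed.

Lemma deg_zero v :
  deg Z v = deg (A :&: B) v + deg (A :&: C) v + deg (B :&: C :&: ~: A) v.
Proof.
suff : deg Z v + deg A v + deg B v + deg C v =
       deg [set: E] v + deg (A :&: B) v + deg (A :&: C) v + deg (B :&: C :&: ~: A) v.
  by rewrite oneA oneB oneC cub; lia.
rewrite !deg_inE -!big_split /=; apply: eq_bigr => e _; rewrite mem_zero !inE.
by case: (e \in A); case: (e \in B); case: (e \in C); rewrite /= ?mul1n ?mul0n; lia.
Qed.

Lemma sum_deg_zero x : 2 * nedges Z (comp x) =
  \sum_(v in comp x) deg (A :&: B) v + \sum_(v in comp x) deg (A :&: C) v
  + 2 * nedges (B :&: C :&: ~: A) (comp x).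
Proof.
rewrite -(sum_deg_comp_of src tgt x zero_sub_compl).
rewrite -(sum_deg_comp_of src tgt x (subsetIr _ (~: A))) -!big_split /=.
by apply: eq_bigr => v _; rewrite deg_zero.
Qed.

Lemma odd_comp_meets_zero x : odd #|comp_edges src A (comp x)| -> 0 < nedges Z (comp x).
Proof.
move=> /oddE [t Kt].
by have := card_comp_edges_split cub oneA oneB x; have := sum_deg_zero x; lia.
Qed.

Lemma odd_count_bound :
  2 * odd_count src tgt A <= #|Z| + \sum_(e in Z) alone e /\
  (2 * odd_count src tgt A = #|Z| + \sum_(e in Z) alone e -> count_tight src tgt A Z).
Proof.
pose odd_comp K := odd #|comp_edges src A K|.
pose charge K := nedges Z K + (odd_comp K && (nedges Z K == 1)) * nedges Z K.
have odd_countE :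
    2 * odd_count src tgt A = \sum_(K in compl_components src tgt A) 2 * odd_comp K.
  by rewrite /odd_count card_set_sum big_distrr.
have chargeE : #|Z| + \sum_(e in Z) alone e = \sum_(K in compl_components src tgt A) charge K.
  by rewrite big_split /= sum_nedges sum_compl_components.
have charge_ge K : K \in compl_components src tgt A -> 2 * odd_comp K <= charge K.
  case/compl_componentsP => x ->; rewrite /charge /odd_comp.
  case K_odd: (odd _) => /=; last by lia.
  have := odd_comp_meets_zero K_odd.
  by case: (nedges Z (comp x) == 1) /eqP => [->|]; lia.
rewrite odd_countE chargeE; split; first exact: leq_sum.
move=> charge_eq x Zx.
have := leq_sum_eq charge_ge charge_eq (comp_of_compl_components src tgt A x).
rewrite /charge /odd_comp; case: (odd _) => /=; last by lia.
by case: (nedges Z (comp x) == 1) /eqP; lia.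
Qed.

(* The E_0-degrees on the odd component K of e sum to 2, so they live on the ends
   of e; by [deg_zero] so do the A∩B- and A∩C-degrees, whose sums over K are odd
   and add up to 2. *)
Lemma alone_ends e : src e != tgt e -> e \in Z -> alone e ->
  [/\ deg Z (src e) = 1, deg Z (tgt e) = 1,
      deg (A :&: B) (src e) + deg (A :&: C) (src e) = 1,
      deg (A :&: B) (tgt e) + deg (A :&: C) (tgt e) = 1 &
      deg (A :&: B) (src e) = deg (A :&: C) (tgt e)].
Proof.
move=> e_nl eZ /andP [K_odd /eqP K_Z].
set u := src e in e_nl K_odd K_Z *; set v := tgt e in e_nl *; set K := comp u in K_odd K_Z.
have eA : e \notin A by move: eZ; rewrite mem_zero => /andP [].
have uK : u \in K by apply: comp_of_self.
have vK : v \in K by rewrite /v -(mem_comp_of_edge src tgt u eA).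
have [t Kt] := oddE K_odd.
have sum_Z := sum_deg_comp_of src tgt u zero_sub_compl.
have sum_BC := sum_deg_comp_of src tgt u (subsetIr (B :&: C) (~: A)).
have card_B := card_comp_edges_split cub oneA oneB u.
have card_C := card_comp_edges_split cub oneA oneC u.
have Z_split := sum_deg_zero u.
rewrite -/K K_Z in sum_Z sum_BC card_B card_C Z_split Kt.
rewrite !(bigD2_nat _ uK vK e_nl) in sum_Z sum_BC card_B card_C Z_split.
have rest : \sum_(w | (w \in K) && (w != u) && (w != v)) deg Z w =
    \sum_(w | (w \in K) && (w != u) && (w != v)) deg (A :&: B) w +
    \sum_(w | (w \in K) && (w != u) && (w != v)) deg (A :&: C) w +
    \sum_(w | (w \in K) && (w != u) && (w != v)) deg (B :&: C :&: ~: A) w.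
  by rewrite -!big_split /=; apply: eq_bigr => w _; rewrite deg_zero.
have := deg_zero u; have := deg_zero v.
have : 0 < deg Z u by apply/deg_gt0P; exists e; rewrite ?eqxx.
have : 0 < deg Z v by apply/deg_gt0P; exists e; rewrite // eqxx orbT.
by clear -Kt sum_Z sum_BC card_B card_C Z_split rest; split; lia.
Qed.

Lemma alone_no_shared_pair e u v f g : src e != tgt e -> e \in Z -> alone e ->
  joins e u v -> incident f u -> incident g v -> ~~ share_pair A B C f g.
Proof.
move=> e_nl eZ e_alone e_uv fu gv.
have [ABuv ACuv ABACu] : [/\ deg (A :&: B) u + deg (A :&: B) v = 1,
    deg (A :&: C) u + deg (A :&: C) v = 1 & deg (A :&: B) u + deg (A :&: C) u = 1].
  have [_ _ s t st] := alone_ends e_nl eZ e_alone.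
  by case/orP: e_uv => /andP [/eqP <- /eqP <-]; clear -s t st; split; lia.
have f_deg (X : {set E}) : f \in X -> 0 < deg X u by move=> fX; apply/deg_gt0P; exists f.
have g_deg (X : {set E}) : g \in X -> 0 < deg X v by move=> gX; apply/deg_gt0P; exists g.
apply/negP; rewrite /share_pair /both_in => /or3P [] /andP [fXY gXY].
- by move: (f_deg _ fXY) (g_deg _ gXY); clear -ABuv; lia.
- by move: (f_deg _ fXY) (g_deg _ gXY); clear -ACuv; lia.
have := deg_setI_le A B u oneC; have := deg_setI_le A C u oneB.
rewrite [C :&: B]setIC setIAC.
have := deg_subset src tgt u (subsetIl (A :&: B) C).
have := deg_subset src tgt u (subsetIl (A :&: C) B); rewrite setIAC.
by move: (f_deg _ fXY); clear -ABACu; lia.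
Qed.

(* Along q0 q1 q2 q3 q4 the A-component K of a1 carries the two E_0-edges q1, q3
   and the (B∩C)-edge q2, so its E_0-count 2 leaves no room for A∩C-degree on K,
   contradicting the oddness of K. *)
Lemma tight_no_shared_pair q0 q1 q2 q3 q4 a1 a2 a3 a4 : count_tight src tgt A Z ->
  both_in A B q0 q4 -> incident q0 a1 -> incident q4 a4 -> a1 != a4 -> q1 != q3 ->
  q1 \in Z -> joins q1 a1 a2 -> q2 \in B -> q2 \in C -> q2 \notin A ->
  joins q2 a2 a3 -> q3 \in Z -> joins q3 a3 a4 -> False.
Proof.
move=> tight /andP [/setIP [q0A q0B] /setIP [q4A q4B]] q0a1 q4a4 a14 q13.
move=> q1Z j1 q2B q2C q2A j2 q3Z j3.
have ZA q : q \in Z -> q \notin A by rewrite mem_zero => /andP [].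
set K := comp a1.
have a1K : a1 \in K by apply: comp_of_self.
have a2K : a2 \in K := mem_comp_of_joins (ZA _ q1Z) j1 a1K.
have a3K : a3 \in K := mem_comp_of_joins q2A j2 a2K.
have a4K : a4 \in K := mem_comp_of_joins (ZA _ q3Z) j3 a3K.
have src_in q x y : joins q x y -> x \in K -> y \in K -> src q \in K.
  by move=> /joins_src [] ->.
have Z2 : 1 < nedges Z K.
  apply/card_gt1P; exists q1, q3; rewrite in_set q1Z (src_in _ _ _ j1 a1K a2K).
  by rewrite in_set q3Z (src_in _ _ _ j3 a3K a4K).
have BC1 : 0 < nedges (B :&: C :&: ~: A) K.
  apply/card_gt0P; exists q2; rewrite in_set (src_in _ _ _ j2 a2K a3K).
  by rewrite !inE q2B q2C q2A.
have [K_odd K_Z] := tight a1 (ltnW Z2).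
have [t Kt] := oddE K_odd.
have card_C := card_comp_edges_split cub oneA oneC a1.
have Z_split := sum_deg_zero a1.
have AB1 : 0 < deg (A :&: B) a1 by apply/deg_gt0P; exists q0; rewrite ?inE ?q0A.
have AB4 : 0 < deg (A :&: B) a4 by apply/deg_gt0P; exists q4; rewrite ?inE ?q4A.
rewrite -/K (bigD2_nat (fun w => deg (A :&: B) w) a1K a4K a14) in Z_split.
rewrite -/K in card_C Kt K_Z.
by clear -Kt card_C Z_split K_Z BC1 AB1 AB4; lia.
Qed.

End FactorTriple.

Lemma alone_unique (V E : finType) (src tgt : E -> V) (A B C Z : {set E}) e :
  cubic src tgt -> factor_triple src tgt A B C Z -> src e != tgt e -> e \in Z ->
  alone src tgt A Z e -> alone src tgt B Z e -> False.
Proof.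
move=> cub tr e_nl eZ eA eB.
have [_ _ AB_s AB_t AB_st] := alone_ends cub tr e_nl eZ eA.
have [_ _ BA_s BA_t BA_st] := alone_ends cub (factor_tripleC12 tr) e_nl eZ eB.
rewrite setIC in BA_s BA_t BA_st.
have := deg_setI_le A B (src e) (triple_factor3 tr).
have := deg_setI_le A B (tgt e) (triple_factor3 tr).
have := deg_subset src tgt (src e) (subsetIl (A :&: B) C).
have := deg_subset src tgt (tgt e) (subsetIl (A :&: B) C).
by lia.
Qed.

Lemma bridgeless_loopless (V E : finType) (src tgt : E -> V) :
  cubic src tgt -> bridgeless src tgt -> forall e, src e != tgt e.
Proof.
move=> cub brl e; apply/negP => /eqP loop_e.
set v := src e in loop_e; pose inc f := (src f == v) + (tgt f == v).
have /sum_nat_eq1 [f [/andP [_ f_e] inc_f inc_other]] :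
    \sum_(f in [set: E] | f != e) inc f == 1.
  by have := cub v; rewrite /deg_in (bigD1 e) //= {1}/v -loop_e eqxx => /eqP.
have stuck x y : adj_without src tgt f x y -> x = v -> y = v.
  case/existsP => g /andP [g_f g_xy] xv; case: (eqVneq g e) => [ge | g_e].
    by move: g_xy; rewrite ge /joins -loop_e xv => /orP [] /andP [/eqP ? /eqP ?].
  have [gx _] := joins_incident g_xy.
  move: gx (inc_other g g_f); rewrite in_setT g_e xv /inc.
  by case: (src g == v); case: (tgt g == v) => // _ /(_ isT).
have closed_v : closed (adj_without src tgt f) (pred1 v).
  move=> x y xy; rewrite !inE; apply/eqP/eqP => [/(stuck _ _ xy) // | yv].
  by apply: (stuck y x) => //; case/existsP: xy => g ?; apply/existsP; exists g; rewrite joinsC.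
have := brl f; rewrite /bridge negbK => /(closed_connect closed_v); rewrite !inE.
by move: inc_f; rewrite /inc; case: (src f == v); case: (tgt f == v).
Qed.

Section ThreeFactors.
Variables (V E : finType) (src tgt : E -> V) (M1 M2 M3 : {set E}).
Hypotheses (cub : cubic src tgt) (loopless : forall e, src e != tgt e).
Hypotheses (one1 : one_factor src tgt M1) (one2 : one_factor src tgt M2)
  (one3 : one_factor src tgt M3).
Local Notation deg := (deg_in src tgt).
Local Notation joins := (joins src tgt).
Local Notation incident e v := ((src e == v) || (tgt e == v)).
Local Notation Z := (Ei M1 M2 M3 0).
Local Notation E2 := (Ei M1 M2 M3 2).
Local Notation E3 := (Ei M1 M2 M3 3).
Local Notation core := (core_edges M1 M2 M3).
Local Notation alone A := (alone src tgt A Z).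
Local Notation share := (share_pair M1 M2 M3).

Let t123 : factor_triple src tgt M1 M2 M3 Z.
Proof.
split=> //; apply/setP => e; rewrite !inE /mult.
by case: (e \in M1); case: (e \in M2); case: (e \in M3).
Qed.
Let t213 := factor_tripleC12 t123.
Let t132 := factor_tripleC23 t123.
Let t231 := factor_tripleC23 t213.
Let t312 := factor_tripleC12 t132.
Let t321 := factor_tripleC12 t231.

Lemma alone_le1 e : e \in Z -> alone M1 e + alone M2 e + alone M3 e <= 1.
Proof.
move=> eZ; case a1: (alone M1 e); case a2: (alone M2 e); case a3: (alone M3 e) => //.
1,2: by case: (alone_unique cub t123 (loopless e) eZ a1 a2).
- by case: (alone_unique cub t132 (loopless e) eZ a1 a3).
- by case: (alone_unique cub t231 (loopless e) eZ a2 a3).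
Qed.

Lemma odd_count_sum :
  odd_count src tgt M1 + odd_count src tgt M2 + odd_count src tgt M3 <= 2 * #|Z| /\
  (odd_count src tgt M1 + odd_count src tgt M2 + odd_count src tgt M3 = 2 * #|Z| ->
   [/\ count_tight src tgt M1 Z, count_tight src tgt M2 Z, count_tight src tgt M3 Z &
       forall e, e \in Z -> [|| alone M1 e, alone M2 e | alone M3 e]]).
Proof.
have [le1 tight1] := odd_count_bound cub t123.
have [le2 tight2] := odd_count_bound cub t213.
have [le3 tight3] := odd_count_bound cub t312.
have sum_alone : \sum_(e in Z) (alone M1 e + alone M2 e + alone M3 e) <= \sum_(e in Z) 1.
  by apply: leq_sum; apply: alone_le1.
rewrite sum1_card !big_split /= in sum_alone.
split=> [|sum_eq]; first by lia.
have alone_eq : \sum_(e in Z) (alone M1 e + alone M2 e + alone M3 e) = \sum_(e in Z) 1.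
  by rewrite sum1_card !big_split /=; lia.
split; [apply: tight1 | apply: tight2 | apply: tight3 | ]; try lia.
move=> e eZ; have := leq_sum_eq alone_le1 alone_eq eZ.
by case: (alone M1 e); case: (alone M2 e); case: (alone M3 e).
Qed.

Lemma deg_E0 v : deg Z v = deg E2 v + 2 * deg E3 v.
Proof.
suff : deg Z v + deg M1 v + deg M2 v + deg M3 v =
       deg [set: E] v + deg E2 v + deg E3 v + deg E3 v.
  by rewrite one1 one2 one3 cub; lia.
rewrite !deg_inE -!big_split /=; apply: eq_bigr => e _; rewrite !inE /mult.
by case: (e \in M1); case: (e \in M2); case: (e \in M3); rewrite /= ?mul1n ?mul0n; lia.
Qed.

Lemma deg_core v : deg core v = deg Z v + deg E2 v + deg E3 v.
Proof.
rewrite !deg_inE -!big_split /=; apply: eq_bigr => e _; rewrite !inE /mult.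
by case: (e \in M1); case: (e \in M2); case: (e \in M3); rewrite /= ?mul1n ?mul0n; lia.
Qed.

Lemma core_vertex_of_edge e v : e \in core -> incident e v -> v \in core_vertices src tgt M1 M2 M3.
Proof. by move=> e_core ev; rewrite inE; apply/existsP; exists e; rewrite e_core. Qed.

Lemma share_pair_notin_E0 f g : share f g -> (f \notin Z) && (g \notin Z).
Proof.
rewrite /share_pair /both_in !inE /mult.
by case: (f \in M1); case: (f \in M2); case: (f \in M3);
  case: (g \in M1); case: (g \in M2); case: (g \in M3).
Qed.

Section Equality.
Hypotheses (tight1 : count_tight src tgt M1 Z) (tight2 : count_tight src tgt M2 Z)
  (tight3 : count_tight src tgt M3 Z)
  (alone_any : forall e, e \in Z -> [|| alone M1 e, alone M2 e | alone M3 e]).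

Lemma deg_E0_ends e : e \in Z -> deg Z (src e) = 1 /\ deg Z (tgt e) = 1.
Proof.
move=> eZ; case/or3P: (alone_any eZ) => e_alone.
- by have [] := alone_ends cub t123 (loopless e) eZ e_alone.
- by have [] := alone_ends cub t213 (loopless e) eZ e_alone.
- by have [] := alone_ends cub t312 (loopless e) eZ e_alone.
Qed.

Lemma core_vertex_deg v : v \in core_vertices src tgt M1 M2 M3 ->
  [/\ deg Z v = 1, deg E2 v = 1 & deg E3 v = 0].
Proof.
rewrite inE => /existsP [e /andP [e_core ev]].
have : 0 < deg core v by apply/deg_gt0P; exists e.
have : deg Z v <= 1.
  case: (posnP (deg Z v)) => [-> // | /deg_gt0P [f fZ /orP [] /eqP <-]].
    by have [-> _] := deg_E0_ends fZ.
  by have [_ ->] := deg_E0_ends fZ.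
by rewrite deg_core; have := deg_E0 v; split; lia.
Qed.

Lemma core_edge_E0_or_E2 e : e \in core -> (e \in Z) || (e \in E2).
Proof.
move=> e_core; have src_core : src e \in core_vertices src tgt M1 M2 M3.
  by apply: (core_vertex_of_edge e_core); rewrite eqxx.
have [_ _ E3_0] := core_vertex_deg src_core.
move: e_core; rewrite !in_setU => /orP [/orP [] -> | e3]; rewrite ?orbT //.
suff : 0 < deg E3 (src e) by rewrite E3_0.
by apply/deg_gt0P; exists e; rewrite ?eqxx.
Qed.

Lemma cyclic_core_eq : cyclic_core src tgt M1 M2 M3.
Proof. by move=> v /core_vertex_deg [Z1 E21 E30]; rewrite deg_core Z1 E21 E30. Qed.

Lemma no_shared_pair2 e a b f g : e \in Z -> joins e a b ->
  incident f a -> incident g b -> ~~ share f g.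
Proof.
move=> eZ e_ab fa gb; case/or3P: (alone_any eZ) => e_alone.
- exact: (alone_no_shared_pair cub t123 (loopless e) eZ e_alone e_ab fa gb).
- by rewrite -share_pairC12 (alone_no_shared_pair cub t213 (loopless e) eZ e_alone e_ab fa gb).
- by rewrite -share_pairC23 -share_pairC12
    (alone_no_shared_pair cub t312 (loopless e) eZ e_alone e_ab fa gb).
Qed.

(* By [no_shared_pair2] across q1, the pairs of q0 and q2 differ, so they meet in one
   factor B and [tight_no_shared_pair] applies with A the other factor of q0's pair. *)
Lemma no_shared_pair4 q0 q1 q2 q3 q4 a1 a2 a3 a4 :
  share q0 q4 -> incident q0 a1 -> incident q4 a4 -> a1 != a4 -> q1 != q3 ->
  q1 \in Z -> joins q1 a1 a2 -> q2 \in E2 -> joins q2 a2 a3 ->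
  q3 \in Z -> joins q3 a3 a4 -> False.
Proof.
move=> sh04 q0a1 q4a4 a14 q13 q1Z j1 q2E2 j2 q3Z j3.
have := no_shared_pair2 q1Z j1 q0a1 (joins_incident j2).1.
move: q2E2 sh04; rewrite inE /mult /share_pair.
case m1: (q2 \in M1); case m2: (q2 \in M2); case m3: (q2 \in M3) => //= _ /or3P [] sh no02.
all: try by move: sh no02; rewrite /share_pair /both_in !inE m1 m2 m3 => /andP [/andP [-> ->] _];
  rewrite ?orbT.
- by apply: (tight_no_shared_pair cub t312 tight3 _ q0a1 q4a4 a14 q13 q1Z j1 _ _ _ j2 q3Z j3);
    rewrite ?m1 ?m2 ?m3 ?sh // both_inC.
- by apply: (tight_no_shared_pair cub t321 tight3 _ q0a1 q4a4 a14 q13 q1Z j1 _ _ _ j2 q3Z j3);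
    rewrite ?m1 ?m2 ?m3 ?sh // both_inC.
- by apply: (tight_no_shared_pair cub t213 tight2 _ q0a1 q4a4 a14 q13 q1Z j1 _ _ _ j2 q3Z j3);
    rewrite ?m1 ?m2 ?m3 ?sh // both_inC.
- by apply: (tight_no_shared_pair cub t231 tight2 _ q0a1 q4a4 a14 q13 q1Z j1 _ _ _ j2 q3Z j3);
    rewrite ?m1 ?m2 ?m3 ?sh // both_inC.
- by apply: (tight_no_shared_pair cub t123 tight1 _ q0a1 q4a4 a14 q13 q1Z j1 _ _ _ j2 q3Z j3);
    rewrite ?m1 ?m2 ?m3 ?sh // both_inC.
- by apply: (tight_no_shared_pair cub t132 tight1 _ q0a1 q4a4 a14 q13 q1Z j1 _ _ _ j2 q3Z j3);
    rewrite ?m1 ?m2 ?m3 ?sh // both_inC.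
Qed.

Section CorePath.
Variables (P : nat -> V) (Q : nat -> E).
Hypotheses (P_inj : forall n m, n < 6 -> m < 6 -> P n = P m -> n = m)
  (Q_path : forall n, n < 5 -> Q n \in core /\ joins (Q n) (P n) (P n.+1)).

Lemma core_path_step n : n < 4 -> (Q n.+1 \in Z) = ~~ (Q n \in Z).
Proof.
move=> n4; have [e_core e_path] : Q n \in core /\ joins (Q n) (P n) (P n.+1) by apply: Q_path; lia.
have [f_core f_path] : Q n.+1 \in core /\ joins (Q n.+1) (P n.+1) (P n.+2) by apply: Q_path.
have ev := (joins_incident e_path).2; have fv := (joins_incident f_path).1.
have [Z1 E21 _] := core_vertex_deg (core_vertex_of_edge e_core ev).
have ef : Q n != Q n.+1.
  apply/eqP => ef; rewrite -ef in f_path.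
  by have := P_inj _ _ (joins_other e_path f_path); lia.
have := core_edge_E0_or_E2 e_core; have := core_edge_E0_or_E2 f_core.
case eZ: (Q n \in Z); case fZ: (Q n.+1 \in Z) => //= fE2 eE2.
- by have := deg_gt1 ef eZ fZ ev fv; rewrite Z1.
- by have := deg_gt1 ef eE2 fE2 ev fv; rewrite E21.
Qed.

Lemma core_path_alternates n : n < 5 -> (Q n \in Z) = (Q 0 \in Z) (+) odd n.
Proof.
elim: n => [|n IHn] n5; first by rewrite addbF.
by rewrite core_path_step // IHn ?(ltnW n5) //= addbN.
Qed.

Lemma core_path_no_shared_pair i j : i < j -> j < 5 -> ~~ share (Q i) (Q j).
Proof.
move=> ij j5; apply/negP => sh; have i5 := ltn_trans ij j5.
have /andP [iZ jZ] := share_pair_notin_E0 sh.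
have Z_parity n : n < 5 -> (Q n \in Z) = (odd n != odd i).
  move=> n5; rewrite core_path_alternates //; move: iZ; rewrite core_path_alternates //.
  by case: (Q 0 \in Z); case: (odd i); case: (odd n).
have [t ji] : exists t, j - i = 2 * t.
  by apply: evenE; move: jZ; rewrite Z_parity // oddB ?(ltnW ij) // negbK => /eqP ->; rewrite addbb.
have [ji2 | [i0 j4]] : j = i.+2 \/ i = 0 /\ j = 4 by lia.
  subst j; have i1 : i.+1 < 5 by lia.
  have i1Z : Q i.+1 \in Z by rewrite Z_parity //=; case: (odd i).
  move: sh; apply/negP; apply: (no_shared_pair2 i1Z (Q_path i1).2).
    exact: (joins_incident (Q_path i5).2).2.
  exact: (joins_incident (Q_path j5).2).1.
subst i j.
apply: (no_shared_pair4 sh (joins_incident (Q_path _).2).2 (joins_incident (Q_path _).2).1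
  _ _ _ (Q_path _).2 _ (Q_path _).2 _ (Q_path _).2) => //.
- by apply/eqP => P14; have := P_inj (n:=1) (m:=4) isT isT P14.
- apply/eqP => Q13; have j3 := (Q_path (n:=3) isT).2; rewrite -Q13 in j3.
  case/orP: (joins_ends (Q_path (n:=1) isT).2 j3) => /eqP P1.
    by have := P_inj (n:=1) (m:=3) isT isT P1.
  by have := P_inj (n:=1) (m:=4) isT isT P1.
- by rewrite Z_parity.
- by have := core_edge_E0_or_E2 (Q_path (n:=2) isT).1; rewrite Z_parity.
- by rewrite Z_parity.
Qed.

End CorePath.

Lemma petersen_core_eq : petersen_core src tgt M1 M2 M3.
Proof.
split; first exact: cyclic_core_eq.
move=> p q [p_inj q_path] [i [j [ij sh]]].
pose P n := p (inord n); pose Q n := q (inord n).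
have P_inj n m : n < 6 -> m < 6 -> P n = P m -> n = m.
  by move=> n6 m6 /p_inj /(congr1 val); rewrite /= !inordK.
have Q_path n : n < 5 -> Q n \in core /\ joins (Q n) (P n) (P n.+1).
  move=> n5; have [q_core q_joins] := q_path (inord n); split=> //.
  have -> : P n = p (widen_ord (leqnSn 5) (inord n)).
    by congr p; apply: val_inj; rewrite /= !inordK //; lia.
  have -> : P n.+1 = p (lift ord0 (inord n)).
    by congr p; apply: val_inj; rewrite /= /bump leq0n add1n !inordK.
  exact: q_joins.
have Q_share : share (Q i) (Q j) by rewrite /Q !inord_val.
case: (ltngtP i j) => [lt_ij | lt_ji | eq_ij].
- by move: Q_share; apply/negP; apply: (core_path_no_shared_pair P_inj Q_path lt_ij).
- by move: Q_share; rewrite share_pair_sym; apply/negP;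
    apply: (core_path_no_shared_pair P_inj Q_path lt_ji).
- by rewrite (val_inj eq_ij) eqxx in ij.
Qed.

End Equality.
End ThreeFactors.

Theorem mainTheorem2 (V E : finType) (src tgt : E -> V) (M1 M2 M3 : {set E}) (k : nat) :
  cubic src tgt -> bridgeless src tgt ->
  one_factor src tgt M1 -> one_factor src tgt M2 -> one_factor src tgt M3 ->
  0 < k -> is_k_core M1 M2 M3 k ->
  odd_count src tgt M1 + odd_count src tgt M2 + odd_count src tgt M3 <= 2 * k /\
  (odd_count src tgt M1 + odd_count src tgt M2 + odd_count src tgt M3 = 2 * k ->
   petersen_core src tgt M1 M2 M3).
Proof.
move=> cub brl one1 one2 one3 _ <-.
have loopless := bridgeless_loopless cub brl.
have [sum_le sum_eq] := odd_count_sum cub loopless one1 one2 one3.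
split=> // /sum_eq [tight1 tight2 tight3 alone_any].
exact: petersen_core_eq cub loopless one1 one2 one3 tight1 tight2 tight3 alone_any.
Qed.
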